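(* Let $R$ be a discrete valuation ring containing a field, with maximal ideal $\mathfrak m$ and fraction field $F$. Then for every integer $n\ge0$: (1) $(1+\mathfrak m)K^M_n(F)\subseteq\widehat K^M_{n+1}(R)$; (2) $(1+\mathfrak m^{m+n})K^M_n(F)\subseteq(1+\mathfrak m^m)\widehat K^M_n(R)$ for all $m\ge1$.
   Context: $\widehat K^M_j(R)$ is the kernel of the residue (tame symbol) map $K^M_j(F)\to K^M_{j-1}(R/\mathfrak m)$ (Kerz's improved Milnor $K$-theory of $R$, viewed inside $K^M_j(F)$). For a subgroup $A\subseteq K^M_n(F)$ and a subgroup $U\subseteq F^\times$, $UA$ denotes the subgroup of $K^M_{n+1}(F)$ generated by the products $\{u\}\cdot a$ with $u\in U$, $a\in A$. *)

(* Milnor K-theory is presented concretely: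
   FS K = free abelian group on words (seq K); K^M_n(K) = FS K / KRel n. *)
From HB Require Import structures.
From mathcomp Require Import all_boot all_order all_algebra.
From mathcomp Require Import freeg.
Set Implicit Arguments. Unset Strict Implicit. Unset Printing Implicit Defensive.
Import Order.TTheory GRing.Theory Num.Theory.
Local Open Scope ring_scope.

Definition FS (K : fieldType) := {freeg (seq K) / int}.

Definition sym (K : fieldType) (s : seq K) : FS K := << s >>.

Inductive zspan (V : zmodType) (P : V -> Prop) : V -> Prop :=
| zspan0 : zspan P 0
| zspan_gen x : P x -> zspan P x
| zspan_sub x y : zspan P x -> zspan P y -> zspan P (x - y).

(* generators of the relation subgroup for K^M_n(K):
   - words that are not of length n or contain 0 (not symbols of F^x),
   - multilinearity in each slot,
   - Steinberg relation on adjacent slots. *)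
Definition MRelGen (K : fieldType) (n : nat) (x : FS K) : Prop :=
  (exists s : seq K, (size s != n) || (0 \in s) /\ x = sym s)
  \/ (exists (s : seq K) (i : nat) (a b : K),
        [/\ (i < size s)%N, a != 0, b != 0 &
            x = sym (set_nth 0 s i (a * b)) - sym (set_nth 0 s i a)
                - sym (set_nth 0 s i b)])
  \/ (exists (s : seq K) (i : nat),
        [/\ (i.+1 < size s)%N, s`_i + s`_i.+1 = 1 & x = sym s]).

Definition KRel (K : fieldType) (n : nat) (x : FS K) : Prop := zspan (@MRelGen K n) x.

(* the subgroup of K^M_n(K) generated by the classes of elements satisfying P *)
Definition modK (K : fieldType) (n : nat) (P : FS K -> Prop) (x : FS K) : Prop :=
  exists y, zspan P y /\ KRel n (x - y).

(* {u} . a  (product in the Milnor K-ring), on representatives *)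
Definition consK (K : fieldType) (u : K) (a : FS K) : FS K :=
  fglift (fun s : seq K => sym (u :: s)) a.

Definition symprod (K : fieldType) (U : K -> Prop) (A : FS K -> Prop) (y : FS K) : Prop :=
  exists u a, [/\ U u, A a & y = consK u a].

(* discrete valuation on F (value at 0 irrelevant); R = {x | x = 0 \/ v x >= 0} *)
Definition is_dvaluation (F : fieldType) (v : F -> int) : Prop :=
  [/\ forall x y, x != 0 -> y != 0 -> v (x * y) = v x + v y,
      forall x y, x != 0 -> y != 0 -> x + y != 0 -> Num.min (v x) (v y) <= v (x + y)
    & exists pi, pi != 0 /\ v pi = 1].

Definition inR (F : fieldType) (v : F -> int) (x : F) : Prop := x = 0 \/ 0 <= v x.
Definition mpow (F : fieldType) (v : F -> int) (j : int) (x : F) : Prop := x = 0 \/ j <= v x.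
Definition unitR (F : fieldType) (v : F -> int) (x : F) : Prop := x != 0 /\ v x = 0.
Definition oneplus (F : fieldType) (P : F -> Prop) (u : F) : Prop := exists x, P x /\ u = 1 + x.

Definition contains_field (F : fieldType) (v : F -> int) : Prop :=
  exists P : F -> Prop,
    [/\ forall x, P x -> inR v x, P 1,
        forall x y, P x -> P y -> P (x - y),
        forall x y, P x -> P y -> P (x * y)
      & forall x, P x -> x != 0 -> P x^-1].

(* res : R -> k is a surjective ring hom with kernel m, i.e. k = R/m *)
Definition is_residue (F k : fieldType) (v : F -> int) (res : F -> k) : Prop :=
  [/\ forall x y, inR v x -> inR v y -> res (x + y) = res x + res y,
      forall x y, inR v x -> inR v y -> res (x * y) = res x * res y,
      res 1 = 1,
      forall x, inR v x -> (res x = 0 <-> mpow v 1 x)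
    & forall c, exists x, inR v x /\ res x = c].

(* d : K^M_{n+1}(F) -> K^M_n(k) is the residue (tame symbol) map w.r.t. the
   uniformizer pi: the homomorphism with d{pi,u_1..u_n} = {res u_1,..,res u_n}
   and d{u_0,..,u_n} = 0 for units u_i of R (Milnor's characterization). *)
Definition is_residue_map (F k : fieldType) (v : F -> int) (res : F -> k)
    (n : nat) (pi : F) (d : FS F -> FS k) : Prop :=
  [/\ pi != 0 /\ v pi = 1,
      forall x y, d (x - y) = d x - d y,
      forall x, KRel n.+1 x -> KRel n (d x),
      forall us : seq F, size us = n -> (forall u, u \in us -> unitR v u) ->
        KRel n (d (sym (pi :: us)) - sym (map res us))
    & forall us : seq F, size us = n.+1 -> (forall u, u \in us -> unitR v u) ->
        KRel n (d (sym us))].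

(* \hat K^M_j(R) = kernel of the residue map K^M_j(F) -> K^M_{j-1}(k)
   (K^M_{-1} = 0, so \hat K^M_0(R) = K^M_0(F)) *)
Definition Khat (F k : fieldType) (v : F -> int) (res : F -> k) (j : nat) : FS F -> Prop :=
  match j with
  | 0 => fun _ => True
  | j'.+1 => fun x => forall pi d, @is_residue_map F k v res j' pi d -> KRel j' (d x)
  end.

(* Modulo the Milnor relations, every symbol of F is a combination of symbols
   {u_1, ..., u_n} and {pi, u_2, ..., u_n} with units u_i: write each entry as
   pi^v(a) * w and move pi to the front by antisymmetry, using {pi, pi} = {pi, -1}.
   For (1), the residue map kills {1 + x, u_1, ..., u_n} by definition, and
   {1 + x, pi, u} = -{pi, 1 + x, u} has residue {res (1 + x), ...} = {1, ...} = 0.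
   For (2), only {1 + x, pi, u} with v(x) = J + 1 >= m + n needs an argument.
   The Steinberg relation {1 + y, -y} = 0 with -y = pi^k w gives
   k{1 + y, pi} = -{1 + y, w} when v(y) = k.  Applied to x itself and to the two
   factors of 1 + x = (1 + pi^J)(1 + y'), v(y') = J, it writes both (J + 1){1 + x, pi}
   and J{1 + x, pi}, hence {1 + x, pi}, through symbols {1 + y, w, u} with
   v(y) >= J >= m and w, u units, which lie in (1 + m^m) \hat K_n(R). *)

From HB Require Import structures.
From mathcomp Require Import all_boot all_order all_algebra.
From mathcomp Require Import freeg zify.
From Stdlib Require Import Setoid Morphisms.
Import Order.TTheory GRing.Theory Num.Theory.
Set Implicit Arguments. Unset Strict Implicit. Unset Printing Implicit Defensive.
Local Open Scope ring_scope.

Definition subgroup (V : zmodType) (Q : V -> Prop) :=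
  Q 0 /\ forall x y, Q x -> Q y -> Q (x - y).

Section Subgroup.
Variables (V : zmodType) (Q : V -> Prop).
Hypothesis HQ : subgroup Q.

Lemma subgroup0 : Q 0. Proof. by case: HQ. Qed.

Lemma subgroupB x y : Q x -> Q y -> Q (x - y). Proof. by case: HQ => _; apply. Qed.

Lemma subgroupN x : Q x -> Q (- x).
Proof. by rewrite -sub0r; apply: subgroupB; apply: subgroup0. Qed.

Lemma subgroupD x y : Q x -> Q y -> Q (x + y).
Proof. by move=> Qx Qy; rewrite -[y]opprK; apply/subgroupB/subgroupN. Qed.

Lemma subgroupMn x k : Q x -> Q (x *+ k).
Proof.
move=> Qx; elim: k => [|k IHk]; first by rewrite mulr0n; apply: subgroup0.
by rewrite mulrS; apply: subgroupD.
Qed.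

Lemma subgroupMz x (c : int) : Q x -> Q (x *~ c).
Proof. by case: c => k Qx; rewrite ?NegzE ?mulrNz; [|apply: subgroupN]; apply: subgroupMn. Qed.

Lemma zspan_min (P : V -> Prop) : (forall x, P x -> Q x) -> forall x, zspan P x -> Q x.
Proof. by move=> PQ x; elim=> [|y /PQ //|y z _ Qy _ Qz]; [apply: subgroup0 | apply: subgroupB]. Qed.

End Subgroup.

Lemma zspan_subgroup (V : zmodType) (P : V -> Prop) : subgroup (zspan P).
Proof. by split; [apply: zspan0 | apply: zspan_sub]. Qed.

Lemma subgroup_preim (U V : zmodType) (f : U -> V) (Q : V -> Prop) :
  (forall x y, f (x - y) = f x - f y) -> subgroup Q -> subgroup (fun x => Q (f x)).
Proof.
move=> fB HQ; have f0 : f 0 = 0 by rewrite -(subrr 0) fB subrr.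
by split=> [|x y Qx Qy]; rewrite ?f0 ?fB; [apply: subgroup0 | apply: subgroupB].
Qed.

Lemma freeg_subgroup_ind (T : choiceType) (Q : {freeg T / int} -> Prop) :
  subgroup Q -> (forall t, Q << t >>) -> forall a, Q a.
Proof.
move=> HQ Qt a; rewrite -(freeg_sumE a).
elim: (dom a) => [|t r IHr]; first by rewrite big_nil; apply: subgroup0.
by rewrite big_cons -[coeff t a]intz -freegU_mulz; apply: subgroupD => //; apply: subgroupMz.
Qed.

Lemma consKB (K : fieldType) (u : K) : forall x y, consK u (x - y) = consK u x - consK u y.
Proof. exact: lift_is_additive. Qed.

Lemma consK_sym (K : fieldType) (u : K) s : consK u (sym s) = sym (u :: s).
Proof. by rewrite /consK /sym liftU scale1r. Qed.

Lemma symprodT_min (K : fieldType) (U : K -> Prop) (Q : FS K -> Prop) :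
  subgroup Q -> (forall u s, U u -> Q (sym (u :: s))) ->
  forall z, symprod U (fun _ => True) z -> Q z.
Proof.
move=> HQ QU _ [u [a [Uu _ ->]]].
apply: (freeg_subgroup_ind (subgroup_preim (consKB u) HQ)) => s.
by rewrite consK_sym; apply: QU.
Qed.

Definition Keq (K : fieldType) (n : nat) (x y : FS K) := KRel n (x - y).

Section MilnorRelations.
Variables (K : fieldType) (n : nat).
Implicit Types (x y : FS K) (a b : K) (p q s : seq K).

Lemma KRel_subgroup : subgroup (@KRel K n).
Proof. exact: zspan_subgroup. Qed.

Lemma KRel0 : KRel n (0 : FS K). Proof. exact: subgroup0 KRel_subgroup. Qed.

#[global] Instance Keq_equiv : Equivalence (@Keq K n).
Proof.
split=> [x | x y | x y z]; rewrite /Keq.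
- by rewrite subrr; apply: KRel0.
- by move=> Kxy; rewrite -opprB; apply: (subgroupN KRel_subgroup).
- by move=> Kxy Kyz; rewrite -[x](subrK y) -addrA; apply: (subgroupD KRel_subgroup).
Qed.

#[global] Instance addr_Keq : Proper (@Keq K n ==> @Keq K n ==> @Keq K n) +%R.
Proof.
by move=> x y Kxy x' y' Kxy'; rewrite /Keq opprD addrACA; apply: (subgroupD KRel_subgroup).
Qed.

#[global] Instance oppr_Keq : Proper (@Keq K n ==> @Keq K n) -%R.
Proof. by move=> x y Kxy; rewrite /Keq -opprD; apply: (subgroupN KRel_subgroup). Qed.

#[global] Instance mulrn_Keq : Proper (@Keq K n ==> eq ==> @Keq K n) (@GRing.natmul _).
Proof. by move=> x y Kxy k _ <-; rewrite /Keq -mulrnBl; apply: (subgroupMn KRel_subgroup). Qed.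

Lemma KRelE x : KRel n x <-> Keq n x 0.
Proof. by rewrite /Keq subr0. Qed.

Lemma Keq0 x : KRel n x -> Keq n x 0. Proof. by move/KRelE. Qed.

#[global] Instance KRel_Keq : Proper (@Keq K n ==> iff) (@KRel K n).
Proof. by move=> x y Kxy; rewrite !KRelE Kxy. Qed.

Lemma modK_subgroup (P : FS K -> Prop) : subgroup (modK n P).
Proof.
split=> [|x y [x' [Px' Kx]] [y' [Py' Ky]]].
  by exists 0; split; [apply: zspan0 | rewrite subrr; apply: KRel0].
exists (x' - y'); split; first exact: zspan_sub.
have -> : x - y - (x' - y') = (x - x') - (y - y').
  by rewrite !opprB [LHS]addrACA [RHS]addrACA [- y + _]addrC.
exact: (subgroupB KRel_subgroup).
Qed.

Lemma modK_min (P Q : FS K -> Prop) : subgroup Q -> (forall x, KRel n x -> Q x) ->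
  (forall x, P x -> Q x) -> forall x, modK n P x -> Q x.
Proof.
move=> HQ KQ PQ x [y [Py Kxy]]; rewrite -[x](subrK y).
by apply: (subgroupD HQ); [apply: KQ | apply: zspan_min PQ _ Py].
Qed.

Lemma modK_KRel (P : FS K -> Prop) x : KRel n x -> modK n P x.
Proof. by move=> Kx; exists 0; split; [apply: zspan0 | rewrite subr0]. Qed.

Lemma modK_gen (P : FS K -> Prop) x : P x -> modK n P x.
Proof. by move=> Px; exists x; split; [apply: zspan_gen | rewrite subrr; apply: KRel0]. Qed.

Lemma modK_span (P Q : FS K -> Prop) :
  (forall x, P x -> modK n Q x) -> forall x, modK n P x -> modK n Q x.
Proof. by apply: modK_min; [apply: modK_subgroup | apply: modK_KRel]. Qed.

#[global] Instance modK_Keq (P : FS K -> Prop) : Proper (@Keq K n ==> iff) (modK n P).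
Proof.
suff imp x y : Keq n x y -> modK n P y -> modK n P x.
  by move=> x y Kxy; split; apply: imp; [symmetry|].
move=> Kxy Py; rewrite -[x](subrK y).
by apply: (subgroupD (modK_subgroup P)) => //; apply: modK_KRel.
Qed.

Lemma KRel_degenerate s : (size s != n) || (0 \in s) -> KRel n (sym s).
Proof. by move=> s_bad; apply: zspan_gen; left; exists s. Qed.

Definition slot p q a := sym (p ++ a :: q).

Lemma set_nth_cat p q a b : set_nth 0 (p ++ a :: q) (size p) b = p ++ b :: q.
Proof. by elim: p => //= c p ->. Qed.

Lemma slotM p q a b : a != 0 -> b != 0 ->
  Keq n (slot p q (a * b)) (slot p q a + slot p q b).
Proof.
move=> a0 b0; rewrite /Keq opprD addrA; apply: zspan_gen; right; left.
exists (p ++ a :: q), (size p), a, b; rewrite !set_nth_cat; split => //.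
by rewrite size_cat /= addnS ltnS leq_addr.
Qed.

Lemma slot1 p q : KRel n (slot p q 1).
Proof.
have := slotM p q (oner_neq0 K) (oner_neq0 K); rewrite mulr1 KRelE => h.
by rewrite -[X in Keq _ _ X](subrr (slot p q 1)) {2}h addrK; reflexivity.
Qed.

Lemma slotV p q a : a != 0 -> Keq n (slot p q a^-1) (- slot p q a).
Proof.
move=> a0; rewrite -[slot p q a^-1](addrK (slot p q a)) -slotM ?invr_neq0 // mulVf //.
by rewrite (Keq0 (slot1 p q)) sub0r; reflexivity.
Qed.

Lemma slotX p q a k : a != 0 -> Keq n (slot p q (a ^+ k)) (slot p q a *+ k).
Proof.
move=> a0; elim: k => [|k IHk]; first by rewrite expr0 mulr0n; apply/Keq0/slot1.
by rewrite exprS mulrS slotM ?expf_neq0 // IHk; reflexivity.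
Qed.

Lemma slotXz p q a (z : int) : a != 0 -> Keq n (slot p q (a ^ z)) (slot p q a *~ z).
Proof.
move=> a0; case: z => k; first exact: slotX.
by rewrite NegzE -exprnN slotV ?expf_neq0 // slotX // mulrNz; reflexivity.
Qed.

Definition slot2 p q a b := sym (p ++ a :: b :: q).

Lemma slot2_l p q a b : slot2 p q a b = slot p (b :: q) a. Proof. by []. Qed.

Lemma slot2_r p q a b : slot2 p q a b = slot (rcons p a) q b.
Proof. by rewrite /slot2 /slot cat_rcons. Qed.

Lemma steinberg p q a : KRel n (slot2 p q a (1 - a)).
Proof.
apply: zspan_gen; right; right; exists (p ++ a :: (1 - a) :: q), (size p); split => //.
  by rewrite size_cat /= !addnS !ltnS leq_addr.
by rewrite !nth_cat ltnn ltnNge leqnSn /= subnn subSnn /= addrC subrK.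
Qed.

Lemma slot2N p q a : a != 0 -> KRel n (slot2 p q a (- a)).
Proof.
move=> a0; have [->|a1] := eqVneq a 1; first by rewrite slot2_l; apply: slot1.
have a1' : 1 - a != 0 by rewrite subr_eq0 eq_sym.
have ai1 : 1 - a^-1 != 0 by rewrite subr_eq0 eq_sym invr_eq1.
have -> : - a = (1 - a) / (1 - a^-1).
  by apply: (mulIf ai1); rewrite mulfVK // mulrBr mulr1 mulNr mulfV // opprK addrC.
rewrite slot2_r slotM ?invr_neq0 // slotV // -!slot2_r (Keq0 (steinberg p q a)).
rewrite slot2_l -[a in slot _ _ a]invrK slotV ?invr_neq0 // -slot2_l.
by rewrite (Keq0 (steinberg p q a^-1)) !oppr0 add0r; apply: KRel0.
Qed.

Lemma slot2C p q a b : a != 0 -> b != 0 -> Keq n (slot2 p q a b) (- slot2 p q b a).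
Proof.
move=> a0 b0; have sum0 := Keq0 (slot2N p q (mulf_neq0 a0 b0)).
rewrite slot2_l slotM // -!slot2_l in sum0.
rewrite -[X in slot2 _ _ a X]mulNr -[X in slot2 _ _ b X]mulrN in sum0.
rewrite !slot2_r !slotM ?oppr_eq0 // -!slot2_r in sum0.
rewrite (Keq0 (slot2N p q a0)) (Keq0 (slot2N p q b0)) add0r addr0 in sum0.
by rewrite -[slot2 p q a b](addrK (slot2 p q b a)) sum0 sub0r; reflexivity.
Qed.

Lemma slot2_diag p q a : a != 0 -> Keq n (slot2 p q a a) (- slot2 p q a (-1)).
Proof.
move=> a0; have sum0 := Keq0 (slot2N p q a0).
rewrite -mulN1r slot2_r slotM ?oppr_eq0 ?oner_eq0 // -!slot2_r in sum0.
by rewrite -[slot2 p q a a](addKr (slot2 p q a (-1))) sum0 addr0; reflexivity.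
Qed.

Lemma steinberg_pow p q a c w k : c != 0 -> w != 0 -> 1 - a = c ^+ k * w ->
  Keq n (slot2 p q a c *+ k) (- slot2 p q a w).
Proof.
move=> c0 w0 ea; have sum0 := Keq0 (steinberg p q a).
rewrite ea slot2_r slotM ?expf_neq0 // slotX // -!slot2_r in sum0.
by rewrite -[_ *+ k](addrK (slot2 p q a w)) sum0 sub0r; reflexivity.
Qed.
End MilnorRelations.

Section Valuation.
Variables (F : fieldType) (v : F -> int).
Hypothesis hv : is_dvaluation v.
Implicit Types (a b x y : F).

Lemma vM a b : a != 0 -> b != 0 -> v (a * b) = v a + v b.
Proof. by case: hv => vM _ _; apply: vM. Qed.

Lemma v1 : v 1 = 0.
Proof. by apply: (addrI (v 1)); rewrite addr0 -vM ?oner_neq0 // mulr1. Qed.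

Lemma vV a : a != 0 -> v a^-1 = - v a.
Proof. by move=> a0; apply: (addIr (v a)); rewrite -vM ?invr_neq0 // mulVf // v1 addNr. Qed.

Lemma vN a : a != 0 -> v (- a) = v a.
Proof.
have N10 : (-1 : F) != 0 by rewrite oppr_eq0 oner_eq0.
have vN1 : v (-1) = 0.
  have : v (-1) + v (-1) = 0 by rewrite -vM // mulrNN mulr1 v1.
  lia.
by move=> a0; rewrite -mulN1r vM // vN1 add0r.
Qed.

Lemma vXn a k : a != 0 -> v (a ^+ k) = v a *+ k.
Proof.
move=> a0; elim: k => [|k IHk]; first by rewrite expr0 v1.
by rewrite exprS vM ?expf_neq0 // IHk mulrS.
Qed.

Lemma vXz a (z : int) : a != 0 -> v (a ^ z) = v a * z.
Proof.
move=> a0; case: z => k; first by rewrite vXn // -mulrzz.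
by rewrite NegzE -exprnN vV ?expf_neq0 // vXn //; lia.
Qed.

Lemma v_addl a b : a != 0 -> b != 0 -> v a < v b -> a + b != 0 /\ v (a + b) = v a.
Proof.
case: hv => _ vmin _ a0 b0 vab.
have ab0 : a + b != 0.
  by apply: contraTneq vab => /eqP; rewrite addr_eq0 => /eqP ->; rewrite vN // ltxx.
have nb0 : - b != 0 by rewrite oppr_eq0.
have le1 : v (a + b) <= v a.
  by have := vmin _ _ ab0 nb0; rewrite addrK vN // ge_min [v b <= _]leNgt vab orbF; apply.
have le2 : v a <= v (a + b).
  by have := vmin _ _ a0 b0 ab0; rewrite ge_min => /orP[//|/(lt_le_trans vab)/ltW].
by split=> //; apply/eqP; rewrite eq_le le1 le2.
Qed.

Lemma unitR_oneplus y : mpow v 1 y -> unitR v (1 + y).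
Proof.
have [->|y0] := eqVneq y 0; first by rewrite addr0; split; [apply: oner_neq0 | apply: v1].
case=> [/eqP|vy]; first by rewrite (negPf y0).
by have [] := @v_addl 1 y (oner_neq0 F) y0; rewrite v1 ?(lt_le_trans ltr01 vy).
Qed.

Lemma unitR_div_pow pi a : pi != 0 -> v pi = 1 -> a != 0 -> unitR v (a / pi ^ v a).
Proof.
move=> pi0 vpi a0; have pia0 : pi ^ v a != 0 by apply: expfz_neq0.
by split; [rewrite mulf_neq0 ?invr_neq0 | rewrite vM ?invr_neq0 // vV // vXz // vpi mul1r subrr].
Qed.

End Valuation.

Section StandardWords.
Variables (F : fieldType) (v : F -> int) (pi : F).
Hypotheses (hv : is_dvaluation v) (pi0 : pi != 0) (vpi : v pi = 1).

Definition unit_word (e : seq F) := forall x, x \in e -> unitR v x.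

Definition std_word (e : seq F) := unit_word e \/ exists2 us, e = pi :: us & unit_word us.

Definition std_syms (N : nat) (p : seq F) (z : FS F) :=
  exists e, [/\ std_word e, size e = N & z = sym (p ++ e)].

Lemma unit_word_cons a e : unitR v a -> unit_word e -> unit_word (a :: e).
Proof. by move=> ua ue x; rewrite inE => /orP[/eqP -> | /ue]. Qed.

Lemma std_syms_rcons n N p b : b = pi \/ unitR v b ->
  forall z, std_syms N (rcons p b) z -> modK n (std_syms N.+1 p) z.
Proof.
have uN1 : unitR v (-1).
  by split; [rewrite oppr_eq0 oner_eq0 | rewrite vN // ?oppr_eq0 ?oner_eq0 // v1].
move=> hb _ [e [[ue | [us -> uus]] se ->]]; rewrite cat_rcons.
  apply: modK_gen; exists (b :: e); split; rewrite /= ?se //.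
  by case: hb => [->|ub]; [right; exists e | left; apply: unit_word_cons].
case: hb => [->|ub].
  rewrite -[sym _]/(slot2 p us pi pi) slot2_diag //.
  apply: (subgroupN (modK_subgroup _ _)); apply: modK_gen.
  exists (pi :: -1 :: us); split; rewrite -?se //.
  by right; exists (-1 :: us) => //; apply: unit_word_cons.
rewrite -[sym _]/(slot2 p us b pi) slot2C //; last by case: ub.
apply: (subgroupN (modK_subgroup _ _)); apply: modK_gen.
exists (pi :: b :: us); split; rewrite -?se //.
by right; exists (b :: us) => //; apply: unit_word_cons.
Qed.

Lemma sym_std_span n s : forall p, (forall x, x \in s -> x != 0) ->
  modK n (std_syms (size s) p) (sym (p ++ s)).
Proof.
elim: s => [|a s IHs] p s0.
  by apply: modK_gen; exists [::]; split => //; left.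
have a0 : a != 0 by apply: s0; rewrite mem_head.
have slot_span b : b = pi \/ unitR v b -> modK n (std_syms (size s).+1 p) (slot p s b).
  move=> hb; rewrite /slot -cat_rcons; apply: (modK_span (std_syms_rcons n hb)).
  by apply: IHs => x sx; apply: s0; rewrite inE sx orbT.
have := unitR_div_pow hv pi0 vpi a0; set w := a / _ => uw.
rewrite -[sym _]/(slot p s a) [X in slot _ _ X](_ : a = pi ^ v a * w); last first.
  by rewrite mulrC divfK ?expfz_neq0.
rewrite slotM ?expfz_neq0 //; last by case: uw.
rewrite slotXz //; apply: (subgroupD (modK_subgroup _ _)); last by apply: slot_span; right.
by apply: (subgroupMz (modK_subgroup _ _)); apply: slot_span; left.
Qed.

Lemma std_word_min N (Q : FS F -> Prop) u :
  subgroup Q -> (forall x, KRel N.+1 x -> Q x) ->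
  (forall e, std_word e -> size e = N -> Q (sym (u :: e))) -> forall s, Q (sym (u :: s)).
Proof.
move=> HQ KQ Qstd s; have [s_bad|] := boolP ((size s != N) || (0 \in s)).
  by apply/KQ/KRel_degenerate; rewrite /= eqSS inE; case/orP: s_bad => ->; rewrite ?orbT.
rewrite negb_or negbK => /andP[/eqP sN s0].
apply: (modK_min HQ KQ _ (sym_std_span N.+1 [:: u] _)) => [_ [e [std se ->]]|x sx].
  by apply: Qstd; rewrite // se.
by apply: contraNneq s0 => <-.
Qed.

End StandardWords.

Section OnePlusPi.
Variables (F : fieldType) (v : F -> int) (pi : F).
Hypotheses (hv : is_dvaluation v) (pi0 : pi != 0) (vpi : v pi = 1).

Definition oneplus_unit_syms (j : int) (q : seq F) (z : FS F) :=
  exists y w, [/\ mpow v j y, unitR v w & z = sym (1 + y :: w :: q)].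

Lemma oneplus_pi_mul_span n q y (k : nat) (j : int) :
  y != 0 -> v y = k%:Z -> j <= k%:Z -> modK n (oneplus_unit_syms j q) (sym (1 + y :: pi :: q) *+ k).
Proof.
move=> y0 vy jk; have pik0 : pi ^+ k != 0 by rewrite expf_neq0.
set w := - y / pi ^+ k; have w0 : w != 0 by rewrite mulf_neq0 ?oppr_eq0 ?invr_neq0.
have vw : v w = 0 by rewrite vM ?oppr_eq0 ?invr_neq0 // vN // vV // vXn // vy vpi; lia.
have ew : 1 - (1 + y) = pi ^+ k * w by rewrite opprD addNKr mulrC divfK.
rewrite -[sym _]/(slot2 [::] q (1 + y) pi) (steinberg_pow n [::] q pi0 w0 ew).
apply: (subgroupN (modK_subgroup _ _)); apply: modK_gen.
by exists y, w; split => //; right; rewrite vy.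
Qed.

Lemma oneplus_pi_span n q x (J : nat) (j : int) :
  x != 0 -> v x = J.+1%:Z -> (0 < J)%N -> j <= J%:Z ->
  modK n (oneplus_unit_syms j q) (sym (1 + x :: pi :: q)).
Proof.
move=> x0 vx J0 jJ; set y1 := pi ^+ J.
have y10 : y1 != 0 by rewrite expf_neq0.
have vy1 : v y1 = J%:Z by rewrite vXn // vpi; lia.
have [u10 _] : unitR v (1 + y1) by apply: (unitR_oneplus hv); right; rewrite vy1; lia.
have [d0 vd] : - y1 + x != 0 /\ v (- y1 + x) = v (- y1).
  by apply: v_addl; rewrite ?oppr_eq0 // vN // vy1 vx ltz_nat.
rewrite vN // vy1 addrC in vd; rewrite addrC in d0.
set y2 := (x - y1) / (1 + y1); have y20 : y2 != 0 by rewrite mulf_neq0 ?invr_neq0.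
have vy2 : v y2 = J%:Z.
  by rewrite vM ?invr_neq0 // vV // vd (unitR_oneplus hv _).2 ?subr0 //; right; rewrite vy1; lia.
have [u20 _] : unitR v (1 + y2) by apply: (unitR_oneplus hv); right; rewrite vy2; lia.
have ex : 1 + x = (1 + y1) * (1 + y2).
  by rewrite mulrDr mulr1 [_ * (_ / _)]mulrC divfK // addrACA subrr addr0.
have spanJ := oneplus_pi_mul_span n q x0 vx (ltac:(lia) : j <= J.+1%:Z).
have spanJ1 : modK n (oneplus_unit_syms j q) (sym (1 + x :: pi :: q) *+ J).
  rewrite -[sym _]/(slot [::] (pi :: q) (1 + x)) ex slotM // mulrnDl.
  by apply: (subgroupD (modK_subgroup _ _)); apply: oneplus_pi_mul_span.
rewrite -[sym _](addrK (sym (1 + x :: pi :: q) *+ J)) -mulrS.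
exact: (subgroupB (modK_subgroup _ _)).
Qed.

End OnePlusPi.

Section ResidueMap.
Variables (F k : fieldType) (v : F -> int) (res : F -> k).
Hypotheses (hv : is_dvaluation v) (hres : is_residue v res).

Lemma res_oneplus x : mpow v 1 x -> res (1 + x) = 1.
Proof.
case: hres => resD _ res1 res_ker _ x1.
have inRx : inR v x by case: x1 => [|vx]; [left | right; apply: le_trans vx].
by rewrite resD ?(proj2 (res_ker x inRx) x1) ?addr0 //; right; rewrite v1.
Qed.

Lemma Khat_unit_word n e : unit_word v e -> size e = n -> Khat v res n (sym e).
Proof. by case: n => [//|n] ue se pi d [_ _ _ _ du]; apply: du. Qed.

Lemma residue_oneplus_sym n pi d x s : is_residue_map v res n pi d -> mpow v 1 x ->
  KRel n (d (sym (1 + x :: s))).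
Proof.
move=> [[pi0 vpi] dB dK dpi du] x1.
have dKeq y z : Keq n.+1 y z -> Keq n (d y) (d z) by move/dK; rewrite dB.
have dN y : d (- y) = - d y.
  have d0 : d 0 = 0 by rewrite -(subrr 0) dB subrr.
  by rewrite -sub0r dB d0 sub0r.
have [u0 _] := unitR_oneplus hv x1.
apply: (std_word_min hv pi0 vpi (subgroup_preim dB (KRel_subgroup _ _)) dK).
move=> e [ue|[us -> uus]] se.
  by apply: du; rewrite /= ?se //; apply/unit_word_cons/ue/unitR_oneplus.
rewrite -[sym _]/(slot2 [::] us (1 + x) pi) (dKeq _ _ (slot2C _ _ _ u0 pi0)) dN.
apply: (subgroupN (KRel_subgroup _ _)); rewrite -[d _](subrK (sym (1 :: map res us))).
apply: (subgroupD (KRel_subgroup _ _)); last exact: (slot1 n [::]).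
have := dpi (1 + x :: us); rewrite /= res_oneplus //.
by apply=> //; apply/unit_word_cons/uus/unitR_oneplus.
Qed.

Lemma oneplus_sym_mod_Khat n m x s : (0 < m)%N -> mpow v (m + n)%:Z x ->
  modK n.+1 (symprod (oneplus (mpow v m%:Z)) (Khat v res n)) (sym (1 + x :: s)).
Proof.
move=> m0 xmn; have [pi [pi0 vpi]] : exists pi, pi != 0 /\ v pi = 1 by case: hv.
have x_m : mpow v m%:Z x by case: xmn => [|vx]; [left | right; apply: le_trans vx; lia].
apply: (std_word_min hv pi0 vpi (modK_subgroup _ _) (@modK_KRel _ _ _)).
move=> e [ue|[us -> uus]] se.
  apply: modK_gen; exists (1 + x), (sym e); split; last by rewrite consK_sym.
    by exists x.
  exact: Khat_unit_word.
have [->|x0] := eqVneq x 0.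
  by apply: modK_KRel; rewrite addr0; apply: (slot1 _ [::]).
have vx : (m + n)%:Z <= v x by case: xmn => [/eqP|//]; rewrite (negPf x0).
have vxJ : v x = (`|v x - 1|%N).+1%:Z by lia.
apply: (modK_span _ (oneplus_pi_span hv pi0 vpi _ us x0 vxJ _ (_ : m%:Z <= _))).
- move=> _ [y [w [ym uw ->]]]; apply: modK_gen; exists (1 + y), (sym (w :: us)).
  split; [by exists y | | by rewrite consK_sym].
  by apply: Khat_unit_word; [apply: unit_word_cons | rewrite -se].
- by move: vx; rewrite -se /=; lia.
- by move: vx; rewrite -se /=; lia.
Qed.

End ResidueMap.

Theorem lemma3p4 (F : fieldType) (v : F -> int) (k : fieldType) (res : F -> k) :
  is_dvaluation v -> contains_field v -> is_residue v res ->
  forall n : nat,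
    (forall x : FS F,
        modK n.+1 (symprod (oneplus (mpow v 1)) (fun _ => True)) x ->
        Khat v res n.+1 x) /\
    (forall m : nat, (1 <= m)%N -> forall x : FS F,
        modK n.+1 (symprod (oneplus (mpow v (m + n)%:Z)) (fun _ => True)) x ->
        modK n.+1 (symprod (oneplus (mpow v m%:Z)) (Khat v res n)) x).
Proof.
move=> hv _ hres n; split=> [x hx pi d hd | m m0].
  have [_ dB dK _ _] := hd.
  have HQ := subgroup_preim dB (KRel_subgroup k n).
  apply: (modK_min HQ dK _ hx); apply: (symprodT_min HQ) => _ s [y [y1 ->]].
  exact (residue_oneplus_sym hv hres s hd y1).
apply: (modK_min (modK_subgroup _ _) (@modK_KRel _ _ _)).
apply: (symprodT_min (modK_subgroup _ _)) => _ s [y [ymn ->]].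
exact: (oneplus_sym_mod_Khat res hv).
Qed.
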